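(* Let $\varepsilon\in(0,\frac12]$, let $G$ be an $\varepsilon$-Ramsey-balanced graph, and let $H$ be obtained from $G$ by deleting one vertex. Then $r(G)\leq \frac{4}{\varepsilon}\cdot r(H)$.
   Context: For a graph $F$, the Ramsey number $r(F)$ is the minimum $N$ such that every two-coloring of the edges of $K_N$ contains a monochromatic copy of $F$. The edge density of an $N$-vertex graph is its number of edges divided by $\binom N2$. For $\varepsilon\in(0,\frac12]$, a two-coloring of $E(K_N)$ is $\varepsilon$-balanced if both color classes have edge density at least $\varepsilon$. A Ramsey coloring for $G$ is a two-coloring of $E(K_N)$ with $N=r(G)-1$ containing no monochromatic copy of $G$. The graph $G$ is $\varepsilon$-Ramsey-balanced if there exists a Ramsey coloring for $G$ which is $\varepsilon$-balanced. *)

From mathcomp Require Import all_boot all_order all_algebra.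
Set Implicit Arguments. Unset Strict Implicit. Unset Printing Implicit Defensive.
Import Order.TTheory GRing.Theory Num.Theory.

(* A two-coloring of E(K_N) is a map [c] from subsets of 'I_N to bool;
   the color of the edge {i,j} is [c [set i; j]] (values on sets of size
   other than 2 are irrelevant). *)
Definition coloring (N : nat) := {set 'I_N} -> bool.

Definition simple_graph (V : finType) (e : rel V) :=
  symmetric e /\ irreflexive e.

Definition has_mono_copy (V : finType) (e : rel V) (N : nat) (c : coloring N) :=
  exists (b : bool) (f : V -> 'I_N),
    injective f /\ forall x y : V, e x y -> c [set f x; f y] = b.

Definition ramsey_arrow (V : finType) (e : rel V) (N : nat) :=
  forall c : coloring N, has_mono_copy e c.

Definition is_ramsey_number (V : finType) (e : rel V) (r : nat) :=
  ramsey_arrow e r /\ forall N, ramsey_arrow e N -> r <= N.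

Definition color_class_size (N : nat) (c : coloring N) (b : bool) : nat :=
  #|[set s : {set 'I_N} | (#|s| == 2) && (c s == b)]|.

Definition edge_density (R : realFieldType) (N : nat) (c : coloring N) (b : bool) : R :=
  ((color_class_size c b)%:R / ('C(N, 2))%:R)%R.

Definition eps_balanced (R : realFieldType) (eps : R) (N : nat) (c : coloring N) :=
  (eps <= edge_density R c true)%R /\ (eps <= edge_density R c false)%R.

Definition ramsey_balanced (R : realFieldType) (eps : R) (V : finType) (e : rel V) :=
  exists r, is_ramsey_number e r /\
    exists c : coloring r.-1, ~ has_mono_copy e c /\ eps_balanced eps c.

Definition del_vertex (V : finType) (e : rel V) (v : V) : rel {x : V | x != v} :=
  fun x y => e (val x) (val y).
Arguments del_vertex {V} e v.

From mathcomp Require Import all_boot all_order all_algebra zify lra.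
Set Implicit Arguments. Unset Strict Implicit. Unset Printing Implicit Defensive.
Import Order.TTheory GRing.Theory Num.Theory.

(* Let c be an eps-balanced Ramsey colouring for G on N = r(G) - 1 vertices
   and n = r(H).  No n vertices can all be b-neighbours of y and
   (~~ b)-neighbours of z: they would contain a monochromatic copy of H,
   which y or z extends to a copy of G.  Taking y and b with
   deg_b(y) >= (N - 1)/2, this forces every (~~ b)-degree to be at most
   3n - 2, while the density of the colour class ~~ b makes some
   (~~ b)-degree at least eps (N - 1).  Hence eps (N + 1) <= 3n - 1 <= 4n. *)

Lemma sum_card_incidence (I J : finType) (A : {set I}) (B : I -> {set J}) :
  \sum_(i in A) #|B i| = \sum_j #|[set i in A | j \in B i]|.
Proof.
under eq_bigr => i _ do rewrite -sum1_card.
rewrite (exchange_big_dep predT) //=; apply: eq_bigr => j _.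
by rewrite sum1_card; apply: eq_card => i; rewrite inE.
Qed.

Section Neighbourhoods.

Variables (N : nat) (c : coloring N).

Definition nbr (b : bool) (x : 'I_N) : {set 'I_N} :=
  [set u | (u != x) && (c [set x; u] == b)].

Lemma nbr_sym b x z : (z \in nbr b x) = (x \in nbr b z).
Proof. by rewrite !inE eq_sym setUC. Qed.

Lemma nbr_negbI b x : nbr b x :&: nbr (~~ b) x = set0.
Proof.
by apply/setP => u; rewrite !inE; case: (u != x); case: (c _); case: b.
Qed.

Lemma card_nbr_split b x : #|nbr b x| + #|nbr (~~ b) x| = N.-1.
Proof.
rewrite -cardsUI nbr_negbI cards0 addn0 -[N in N.-1]card_ord -(cardsC1 x).
by apply: eq_card => u; rewrite !inE; case: (u != x); case: (c _); case: b.
Qed.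

Lemma card_nbr_le b x w :
  #|nbr (~~ b) w| <= #|nbr (~~ b) x| + #|nbr b x :&: nbr (~~ b) w| + 1.
Proof.
have := card_nbr_split b x; have := cardsUI (nbr b x) (nbr (~~ b) w).
have := subset_leq_card (subsetT (nbr b x :|: nbr (~~ b) w)).
rewrite cardsT card_ord; have := ltn_ord x; lia.
Qed.

Lemma sum_card_nbr_incidence b (A : {set 'I_N}) :
  \sum_(x in A) #|nbr b x| = \sum_z #|A :&: nbr b z|.
Proof.
rewrite sum_card_incidence; apply: eq_bigr => z _; apply: eq_card => x.
by rewrite [in LHS]inE in_setI nbr_sym.
Qed.

Lemma color_class_size_le_sum b : 2 * color_class_size c b <= \sum_w #|nbr b w|.
Proof.
rewrite /color_class_size; set E := [set s | _].
have -> : 2 * #|E| = \sum_(s in E) #|s|.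
  rewrite mulnC -sum_nat_const; apply: eq_bigr => s.
  by rewrite inE => /andP[/eqP -> _].
rewrite sum_card_incidence; apply: leq_sum => w _.
apply: leq_trans (leq_imset_card (fun u => [set w; u]) _); apply: subset_leq_card.
apply/subsetP => s; rewrite !inE => /andP[/andP[/cards2P[a [a' [aa' ->]]] cb]].
rewrite !inE => /orP[] /eqP ->; apply/imsetP.
- by exists a'; rewrite // inE eq_sym aa'.
- by exists a; rewrite 1?setUC // inE aa' setUC.
Qed.

End Neighbourhoods.

Lemma is_ramsey_number_unique (V : finType) (e : rel V) r1 r2 :
  is_ramsey_number e r1 -> is_ramsey_number e r2 -> r1 = r2.
Proof.
by move=> [arrow1 min1] [arrow2 min2]; apply/eqP; rewrite eqn_leq min1 ?min2.
Qed.

Lemma ramsey_arrow_subset (V : finType) (e : rel V) n N (c : coloring N)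
    (S : {set 'I_N}) :
  ramsey_arrow e n -> n <= #|S| ->
  exists b (h : V -> 'I_N), [/\ injective h, forall x, h x \in S &
    forall x y, e x y -> c [set h x; h y] = b].
Proof.
move=> arrow le_nS; pose g (i : 'I_n) : 'I_N := enum_val (widen_ord le_nS i).
have g_inj : injective g.
  by move=> i j /enum_val_inj /(congr1 val) ij; apply: val_inj.
have [b [f [f_inj f_mono]]] := arrow (fun s => c (g @: s)).
exists b, (g \o f); split=> [x y /g_inj /f_inj //| x | x y /f_mono].
  exact: enum_valP.
by rewrite imsetU1 imset_set1.
Qed.

Lemma has_mono_copy_extend (V : finType) (e : rel V) v N (c : coloring N) b
    (w : 'I_N) (h : {x : V | x != v} -> 'I_N) :
  irreflexive e -> injective h -> (forall x, h x != w) ->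
  (forall x y, e (val x) (val y) -> c [set h x; h y] = b) ->
  (forall x, c [set w; h x] = b) -> has_mono_copy e c.
Proof.
move=> e_irr h_inj h_w h_mono w_mono.
exists b, (fun u => if insub u is Some x then h x else w); split.
- move=> u u'; case: insubP => [x _ <-|]; case: insubP => [x' _ <-|] //=.
  + by move/h_inj ->.
  + by move=> _ hxw; move: (h_w x); rewrite hxw eqxx.
  + by move=> _ whx; move: (h_w x'); rewrite -whx eqxx.
  + by rewrite !negbK => /eqP -> /eqP ->.
- move=> u u'; case: insubP => [x _ <-|]; case: insubP => [x' _ <-|] //=.
  + exact: h_mono.
  + by rewrite setUC.
  + by rewrite !negbK => /eqP -> /eqP ->; rewrite e_irr.
Qed.

Lemma card_common_nbr_lt (V : finType) (e : rel V) v n N (c : coloring N)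
    b (y z : 'I_N) :
  irreflexive e -> ramsey_arrow (del_vertex e v) n -> ~ has_mono_copy e c ->
  #|nbr c b y :&: nbr c (~~ b) z| < n.
Proof.
move=> e_irr arrow no_mono; rewrite ltnNge; apply/negP.
move=> /(ramsey_arrow_subset c arrow) [b' [h [h_inj h_S h_mono]]].
apply: no_mono.
have [w b'_nbr] : exists w, forall x, h x \in nbr c b' w.
  have [-> | ->] : b' = b \/ b' = ~~ b by destruct b, b'; auto.
  - by exists y => x; have := h_S x; rewrite in_setI => /andP[].
  - by exists z => x; have := h_S x; rewrite in_setI => /andP[].
apply: (has_mono_copy_extend (w := w) (h := h) e_irr h_inj _ h_mono) => x;
  by have := b'_nbr x; rewrite inE => /andP[? /eqP].
Qed.

Section SmallCommonNeighbourhoods.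

Variables (N n : nat) (c : coloring N).
Hypothesis common_nbr_small :
  forall b y z, #|nbr c b y :&: nbr c (~~ b) z| < n.

Lemma sum_card_nbr_le b y :
  \sum_(x in nbr c b y) #|nbr c (~~ b) x| <= N.-1 * n.-1.
Proof.
rewrite sum_card_nbr_incidence (bigD1 y) //= nbr_negbI cards0 add0n.
rewrite -[N in N.-1]card_ord -(cardC1 y) -sum_nat_const; apply: leq_sum => z _.
by rewrite -ltnS (ltn_predK (common_nbr_small b y z)).
Qed.

(* By card_nbr_le each x in [nbr c b y] has (~~ b)-degree at least
   [d - n], d the (~~ b)-degree of w, while by sum_card_nbr_le these degrees
   sum to at most [(N - 1)(n - 1)]; so d is small when [nbr c b y] is large. *)
Lemma card_nbr_le_3n b y w :
  N.-1 <= 2 * #|nbr c b y| -> #|nbr c (~~ b) w| + 2 <= 3 * n.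
Proof.
set A := nbr c b y; set d := #|nbr c (~~ b) w| => big_nbr.
have n_gt0 : 0 < n := leq_ltn_trans (leq0n _) (common_nbr_small b y y).
have d_le : d <= N.-1 by rewrite -(card_nbr_split c (~~ b) w) leq_addr.
have sum_ge : #|A| * d <= \sum_(x in A) #|nbr c (~~ b) x| + #|A| * n.
  rewrite -!sum_nat_const -big_split /=; apply: leq_sum => x _.
  apply: leq_trans (card_nbr_le c b x w) _; rewrite -addnA leq_add2l addn1.
  exact: common_nbr_small.
have sum_le := sum_card_nbr_le b y; rewrite -/A in sum_le; clearbody A d.
have [A0 | A_gt0] := posnP #|A|.
  by move: big_nbr; rewrite A0; lia.
have : #|A| * (d + 2) <= #|A| * (3 * n) by nia.
by rewrite leq_pmul2l.
Qed.

Lemma exists_sparse_color (y : 'I_N) :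
  exists b, forall w, #|nbr c b w| + 2 <= 3 * n.
Proof.
have [b big_nbr] : exists b, N.-1 <= 2 * #|nbr c b y|.
  have : #|nbr c true y| + #|nbr c false y| = N.-1 := card_nbr_split c true y.
  by case: (leqP N.-1 (2 * #|nbr c true y|)); [exists true | exists false; lia].
by exists (~~ b) => w; apply: card_nbr_le_3n big_nbr.
Qed.

End SmallCommonNeighbourhoods.

Local Open Scope ring_scope.

Lemma edge_density_gt0_gt1 (R : realFieldType) N (c : coloring N) b :
  0 < edge_density R c b -> (1 < N)%N.
Proof.
rewrite ltnNge; apply: contraTN => N_le1.
by rewrite /edge_density bin_small ?invr0 ?mulr0 ?ltxx //; lia.
Qed.

Lemma bin2_mul2 n : ('C(n, 2) * 2 = n * n.-1)%N.
Proof. by rewrite -[2%N]/(2`!) bin_ffact ffactnS ffactn1. Qed.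

Lemma edge_density_le_max_degree (R : realFieldType) (eps D : R) N
    (c : coloring N) b :
  0 < eps -> eps <= edge_density R c b -> (forall w, #|nbr c b w|%:R <= D) ->
  eps * (N.-1)%:R <= D.
Proof.
move=> eps_gt0 eps_le deg_le.
have N_gt1 := edge_density_gt0_gt1 (lt_le_trans eps_gt0 eps_le).
have class_ge : eps * 'C(N, 2)%:R <= (color_class_size c b)%:R.
  by rewrite -ler_pdivlMr // ltr0n bin_gt0.
have class_le : 2 * (color_class_size c b)%:R <= N%:R * D.
  have -> : N%:R * D = \sum_(w : 'I_N) D by rewrite sumr_const card_ord mulr_natl.
  apply: le_trans (ler_sum _ (fun w _ => deg_le w)).
  by rewrite -natrM -natr_sum ler_nat color_class_size_le_sum.
have N_gt0 : (0 : R) < N%:R by rewrite ltr0n; lia.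
rewrite -(ler_pM2l N_gt0) mulrCA -natrM -bin2_mul2 natrM mulrA.
by apply: le_trans class_le; rewrite mulrC ler_pM2l ?ltr0n.
Qed.

Theorem proposition1p4 (R : realFieldType) (eps : R) (V : finType) (e : rel V)
    (v : V) (rG rH : nat) :
  0 < eps -> eps <= 2^-1 ->
  simple_graph e ->
  ramsey_balanced eps e ->
  is_ramsey_number e rG ->
  is_ramsey_number (del_vertex e v) rH ->
  (rG%:R : R) <= 4 / eps * rH%:R.
Proof.
move=> eps_gt0 eps_le_half [_ e_irr] [r [ramsey_r [c [no_mono [dens_t dens_f]]]]].
move=> ramsey_G [arrow_H _]; rewrite -(is_ramsey_number_unique ramsey_r ramsey_G).
have order_gt1 := edge_density_gt0_gt1 (lt_le_trans eps_gt0 dens_t).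
have small b y z : (#|nbr c b y :&: nbr c (~~ b) z| < rH)%N :=
  card_common_nbr_lt b y z e_irr arrow_H no_mono.
have [b sparse] := exists_sparse_color small (Ordinal (ltnW order_gt1)).
have dens_b : eps <= edge_density R c b by case: b {sparse}.
have deg_le w : #|nbr c b w|%:R <= 3 * rH%:R - 2 :> R.
  by rewrite lerBrDr -natrM -natrD ler_nat sparse.
have bound := edge_density_le_max_degree eps_gt0 dens_b deg_le.
have -> : r = (r.-1.-1 + 2)%N by lia.
have := ler0n R rH; rewrite natrD mulrAC ler_pdivlMr //; nra.
Qed.
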